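(* Let $A$ be a weak bimonoid in a duoidal category $(\mathcal M,\circ,I,\bullet,J)$. Then there is a functor $F:\mathcal M^I\to\mathcal M^A_A$ such that $U^A\circ F=((-)\circ A)\circ U^I$, where $U^I:\mathcal M^I\to\mathcal M$ and $U^A:\mathcal M^A_A\to\mathcal M_A$ are the forgetful functors and $(-)\circ A:\mathcal M\to\mathcal M_A$ sends $X$ to the free right $A$-module $(X\circ A,X\circ\mu)$.
   Context: Composition of morphisms is written $g\cdot f$ ($f$ first). Associativity and unit isomorphisms of both monoidal products are suppressed. A duoidal category $(\mathcal M,\circ,I,\bullet,J)$ is a category $\mathcal M$ with two monoidal structures $(\circ,I)$ and $(\bullet,J)$, morphisms $\delta:I\to I\bullet I$, $\varpi:J\circ J\to J$, $\tau:I\to J$, and a natural transformation $\zeta_{A,B,C,D}:(A\bullet B)\circ(C\bullet D)\to(A\circ C)\bullet(B\circ D)$ such that: $(J,\varpi,\tau)$ is a monoid in $(\mathcal M,\circ,I)$; $(I,\delta,\tau)$ is a comonoid in $(\mathcal M,\bullet,J)$; for all objects, $\zeta_{A,B,C\circ E,D\circ F}\cdot((A\bullet B)\circ\zeta_{C,D,E,F})=\zeta_{A\circ C,B\circ D,E,F}\cdot(\zeta_{A,B,C,D}\circ(E\bullet F))$ and $((A\circ D)\bullet\zeta_{B,C,E,F})\cdot\zeta_{A,B\bullet C,D,E\bullet F}=(\zeta_{A,B,D,E}\bullet(C\circ F))\cdot\zeta_{A\bullet B,C,D\bullet E,F}$; and $\zeta_{I,I,A,B}\cdot(\delta\circ(A\bullet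 B))=\mathrm{id}=\zeta_{A,B,I,I}\cdot((A\bullet B)\circ\delta)$, $(\varpi\bullet(A\circ B))\cdot\zeta_{J,A,J,B}=\mathrm{id}=((A\circ B)\bullet\varpi)\cdot\zeta_{A,J,B,J}$. A weak bimonoid is an object $A$ with a monoid structure $(\mu,\eta)$ in $(\mathcal M,\circ,I)$ and a comonoid structure $(\Delta,\varepsilon)$ in $(\mathcal M,\bullet,J)$ satisfying, with $e:=\Delta\cdot\eta$ and $\bar\mu:=\varepsilon\cdot\mu$: (WB) $\Delta\cdot\mu=(\mu\bullet\mu)\cdot\zeta_{A,A,A,A}\cdot(\Delta\circ\Delta)$. (RRU) $(I\bullet A\bullet\mu\bullet A)\cdot(\zeta_{I,A,I\bullet A,A}\bullet A)\cdot(((I\bullet A)\circ(I\bullet e))\bullet A)\cdot(((I\bullet A)\circ\delta)\bullet A)\cdot(I\bullet e)\cdot\delta=(I\bullet A\bullet\Delta)\cdot(I\bullet\Delta)\cdot(I\bullet\eta)\cdot\delta$. (RLU) $(I\bullet A\bullet\mu\bullet A)\cdot(\zeta_{I\bullet A,A,I,A}\bullet A)\cdot(((I\bullet e)\circ(I\bullet A))\bullet A)\cdot((\delta\circ(I\bullet A))\bullet A)\cdot(I\bullet e)\cdot\delta=(I\bullet A\bullet\Delta)\cdot(I\bullet\Delta)\cdot(I\bullet\eta)\cdot\delta$. (LRU) $(A\bullet\mu\bullet A\bullet I)\cdot(A\bullet\zeta_{A,I,A,A\bullet I})\cdot(A\bullet((A\bullet I)\circ(e\bullet I)))\cdot(A\bullet((A\bullet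 I)\circ\delta))\cdot(e\bullet I)\cdot\delta=(\Delta\bullet A\bullet I)\cdot(\Delta\bullet I)\cdot(\eta\bullet I)\cdot\delta$. (LLU) $(A\bullet\mu\bullet A\bullet I)\cdot(A\bullet\zeta_{A,A\bullet I,A,I})\cdot(A\bullet((e\bullet I)\circ(A\bullet I)))\cdot(A\bullet(\delta\circ(A\bullet I)))\cdot(e\bullet I)\cdot\delta=(\Delta\bullet A\bullet I)\cdot(\Delta\bullet I)\cdot(\eta\bullet I)\cdot\delta$. (LRC) $\varpi\cdot(J\circ\bar\mu)\cdot((\varpi\bullet(J\circ A))\circ A)\cdot(((J\circ\bar\mu)\bullet(J\circ A))\circ A)\cdot(\zeta_{J\circ A,J,A,A}\circ A)\cdot(J\circ A\circ\Delta\circ A)=\varpi\cdot(J\circ\varepsilon)\cdot(J\circ\mu)\cdot(J\circ A\circ\mu)$. (LLC) $\varpi\cdot(J\circ\bar\mu)\cdot(((J\circ A)\bullet\varpi)\circ A)\cdot(((J\circ A)\bullet(J\circ\bar\mu))\circ A)\cdot(\zeta_{J,J\circ A,A,A}\circ A)\cdot(J\circ A\circ\Delta\circ A)=\varpi\cdot(J\circ\varepsilon)\cdot(J\circ\mu)\cdot(J\circ A\circ\mu)$. (RRC) $\varpi\cdot(\bar\mu\circ J)\cdot(A\circ(\varpi\bullet(A\circ J)))\cdot(A\circ((\bar\mu\circ J)\bullet(A\circ J)))\cdot(A\circ\zeta_{A,A,A\circ J,J})\cdot(A\circ\Delta\circ A\circ J)=\varpi\cdot(\varepsilon\circ J)\cdot(\mu\circ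 J)\cdot(\mu\circ A\circ J)$. (RLC) $\varpi\cdot(\bar\mu\circ J)\cdot(A\circ((A\circ J)\bullet\varpi))\cdot(A\circ((A\circ J)\bullet(\bar\mu\circ J)))\cdot(A\circ\zeta_{A,A,J,A\circ J})\cdot(A\circ\Delta\circ A\circ J)=\varpi\cdot(\varepsilon\circ J)\cdot(\mu\circ J)\cdot(\mu\circ A\circ J)$. $\mathcal M^I$ is the category of comodules over the comonoid $(I,\delta,\tau)$ in $(\mathcal M,\bullet,J)$: objects $(Z,\varrho:Z\to Z\bullet I)$ with $(Z\bullet\delta)\cdot\varrho=(\varrho\bullet I)\cdot\varrho$ and $(Z\bullet\tau)\cdot\varrho=\mathrm{id}_Z$, morphisms commuting with the coactions. $\mathcal M_A$ is the category of right modules over the monoid $A$ in $(\mathcal M,\circ,I)$. The category $\mathcal M^A_A$ of Hopf modules has objects $(M,\gamma,\varrho)$ with $(M,\gamma:M\circ A\to M)$ a right $A$-module, $(M,\varrho:M\to M\bullet A)$ a right comodule over the comonoid $(A,\Delta,\varepsilon)$ in $(\mathcal M,\bullet,J)$, such that $\varrho\cdot\gamma=(\gamma\bullet A)\cdot((M\circ A)\bullet\mu)\cdot\zeta_{M,A,A,A}\cdot((M\bullet A)\circ\Delta)\cdot(\varrho\circ A)$; morphisms are morphisms that are both $A$-module and $A$-comodule maps. $U^A$ forgets the coaction. *)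

(* Coherence isomorphisms that the paper suppresses are inserted explicitly. *)
Set Implicit Arguments.
Unset Strict Implicit.

Record Cat := {
  ob :> Type;
  hom : ob -> ob -> Type;
  idm : forall a, hom a a;
  cmp : forall {a b c}, hom b c -> hom a b -> hom a c;
  cmp_idl : forall a b (f : hom a b), cmp (idm b) f = f;
  cmp_idr : forall a b (f : hom a b), cmp f (idm a) = f;
  cmp_assoc : forall a b c d (h : hom c d) (g : hom b c) (f : hom a b),
      cmp h (cmp g f) = cmp (cmp h g) f }.
Arguments hom {c0} a b.
Arguments idm {c0} a.
Arguments cmp {c0 a b c} g f.

(** [g ⋅ f] is "g after f" (the paper's [g·f], f first). *)
Notation "g ⋅ f" := (cmp g f) (at level 50, left associativity).

Record MonStr (C : Cat) := {
  tn : C -> C -> C;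
  tm : forall {a b c d : C}, hom a b -> hom c d -> hom (tn a c) (tn b d);
  un : C;
  asc : forall a b c : C, hom (tn (tn a b) c) (tn a (tn b c));
  asci : forall a b c : C, hom (tn a (tn b c)) (tn (tn a b) c);
  lu : forall a : C, hom (tn un a) a;
  lui : forall a : C, hom a (tn un a);
  ru : forall a : C, hom (tn a un) a;
  rui : forall a : C, hom a (tn a un);
  tm_id : forall a b : C, tm (idm a) (idm b) = idm (tn a b);
  tm_cmp : forall (a b c a' b' c' : C) (f : hom a b) (g : hom b c)
      (f' : hom a' b') (g' : hom b' c'),
      tm (g ⋅ f) (g' ⋅ f') = tm g g' ⋅ tm f f';
  asc_nat : forall (a a' b b' c c' : C) (f : hom a a') (g : hom b b') (h : hom c c'),
      asc a' b' c' ⋅ tm (tm f g) h = tm f (tm g h) ⋅ asc a b c;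
  lu_nat : forall (a a' : C) (f : hom a a'), lu a' ⋅ tm (idm un) f = f ⋅ lu a;
  ru_nat : forall (a a' : C) (f : hom a a'), ru a' ⋅ tm f (idm un) = f ⋅ ru a;
  asc_isoL : forall a b c : C, asci a b c ⋅ asc a b c = idm (tn (tn a b) c);
  asc_isoR : forall a b c : C, asc a b c ⋅ asci a b c = idm (tn a (tn b c));
  lu_isoL : forall a : C, lui a ⋅ lu a = idm (tn un a);
  lu_isoR : forall a : C, lu a ⋅ lui a = idm a;
  ru_isoL : forall a : C, rui a ⋅ ru a = idm (tn a un);
  ru_isoR : forall a : C, ru a ⋅ rui a = idm a;
  pentagon : forall a b c d : C,
      asc a b (tn c d) ⋅ asc (tn a b) c d
      = tm (idm a) (asc b c d) ⋅ asc a (tn b c) d ⋅ tm (asc a b c) (idm d);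
  triangle : forall a b : C, tm (idm a) (lu b) ⋅ asc a un b = tm (ru a) (idm b) }.
Arguments tn {C} m a b.
Arguments tm {C} m {a b c d} f g.
Arguments un {C} m.
Arguments asc {C} m a b c.
Arguments asci {C} m a b c.
Arguments lu {C} m a.
Arguments lui {C} m a.
Arguments ru {C} m a.
Arguments rui {C} m a.

Section Duoidal.
Context {C : Cat} (O B : MonStr C).

Local Notation "x ∘ y" := (tn O x y) (at level 33, no associativity).
Local Notation "x • y" := (tn B x y) (at level 33, no associativity).
Local Notation "f ⊚ g" := (tm O f g) (at level 33, no associativity).
Local Notation "f ⊙ g" := (tm B f g) (at level 33, no associativity).
Local Notation I := (un O).
Local Notation J := (un B).

Record DuoStr := {
  delta : hom I (I • I);
  varpi : hom (J ∘ J) J;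
  tau : hom I J;
  zeta : forall a b c d : C, hom ((a • b) ∘ (c • d)) ((a ∘ c) • (b ∘ d));
  zeta_nat : forall (a a' b b' c c' d d' : C)
      (f : hom a a') (g : hom b b') (h : hom c c') (k : hom d d'),
      zeta a' b' c' d' ⋅ ((f ⊙ g) ⊚ (h ⊙ k)) = ((f ⊚ h) ⊙ (g ⊚ k)) ⋅ zeta a b c d;
  varpi_assoc : varpi ⋅ (varpi ⊚ idm J) = varpi ⋅ (idm J ⊚ varpi) ⋅ asc O J J J;
  varpi_unitl : varpi ⋅ (tau ⊚ idm J) = lu O J;
  varpi_unitr : varpi ⋅ (idm J ⊚ tau) = ru O J;
  delta_coassoc : asc B I I I ⋅ (delta ⊙ idm I) ⋅ delta = (idm I ⊙ delta) ⋅ delta;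
  delta_counitl : lu B I ⋅ (tau ⊙ idm I) ⋅ delta = idm I;
  delta_counitr : ru B I ⋅ (idm I ⊙ tau) ⋅ delta = idm I;
  zeta_assocO : forall a b c d e f : C,
      (asc O a c e ⊙ asc O b d f) ⋅ zeta (a ∘ c) (b ∘ d) e f ⋅ (zeta a b c d ⊚ idm (e • f))
      = zeta a b (c ∘ e) (d ∘ f) ⋅ (idm (a • b) ⊚ zeta c d e f) ⋅ asc O (a • b) (c • d) (e • f);
  zeta_assocB : forall a b c d e f : C,
      asc B (a ∘ d) (b ∘ e) (c ∘ f) ⋅ (zeta a b d e ⊙ idm (c ∘ f)) ⋅ zeta (a • b) c (d • e) f
      = (idm (a ∘ d) ⊙ zeta b c e f) ⋅ zeta a (b • c) d (e • f) ⋅ (asc B a b c ⊚ asc B d e f);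
  zeta_unitl : forall a b : C,
      (lu O a ⊙ lu O b) ⋅ zeta I I a b ⋅ (delta ⊚ idm (a • b)) = lu O (a • b);
  zeta_unitr : forall a b : C,
      (ru O a ⊙ ru O b) ⋅ zeta a b I I ⋅ (idm (a • b) ⊚ delta) = ru O (a • b);
  zeta_counitl : forall a b : C,
      lu B (a ∘ b) ⋅ (varpi ⊙ idm (a ∘ b)) ⋅ zeta J a J b = (lu B a ⊚ lu B b);
  zeta_counitr : forall a b : C,
      ru B (a ∘ b) ⋅ (idm (a ∘ b) ⊙ varpi) ⋅ zeta a J b J = (ru B a ⊚ ru B b) }.

Context (D : DuoStr) (A : C).

Local Notation δ := (delta D).
Local Notation ϖ := (varpi D).
Local Notation ζ := (zeta D).

(** * Weak bimonoids.  In the axioms, [e = Delta ⋅ eta] and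
    [mubar = eps ⋅ mu] are written out. *)
Record WeakBimonoid := {
  mu : hom (A ∘ A) A;
  eta : hom I A;
  Delta : hom A (A • A);
  eps : hom A J;
  mu_assoc : mu ⋅ (mu ⊚ idm A) = mu ⋅ (idm A ⊚ mu) ⋅ asc O A A A;
  mu_unitl : mu ⋅ (eta ⊚ idm A) = lu O A;
  mu_unitr : mu ⋅ (idm A ⊚ eta) = ru O A;
  Delta_coassoc : asc B A A A ⋅ (Delta ⊙ idm A) ⋅ Delta = (idm A ⊙ Delta) ⋅ Delta;
  Delta_counitl : lu B A ⋅ (eps ⊙ idm A) ⋅ Delta = idm A;
  Delta_counitr : ru B A ⋅ (idm A ⊙ eps) ⋅ Delta = idm A;
  wb_mult : Delta ⋅ mu = (mu ⊙ mu) ⋅ ζ A A A A ⋅ (Delta ⊚ Delta);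
  wb_RRU :
    asc B I A (A • A) ⋅ asc B (I • A) A A
    ⋅ ((lu O (I • A) ⊙ mu) ⊙ idm A)
    ⋅ (ζ I A (I • A) A ⊙ idm A)
    ⋅ ((idm (I • A) ⊚ asci B I A A) ⊙ idm A)
    ⋅ ((idm (I • A) ⊚ (idm I ⊙ (Delta ⋅ eta))) ⊙ idm A)
    ⋅ ((idm (I • A) ⊚ δ) ⊙ idm A)
    ⋅ (rui O (I • A) ⊙ idm A)
    ⋅ asci B I A A ⋅ (idm I ⊙ (Delta ⋅ eta)) ⋅ δ
    = (idm I ⊙ (idm A ⊙ Delta)) ⋅ (idm I ⊙ Delta) ⋅ (idm I ⊙ eta) ⋅ δ;
  wb_RLU :
    asc B I A (A • A) ⋅ asc B (I • A) A A
    ⋅ ((ru O (I • A) ⊙ mu) ⊙ idm A)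
    ⋅ (ζ (I • A) A I A ⊙ idm A)
    ⋅ ((asci B I A A ⊚ idm (I • A)) ⊙ idm A)
    ⋅ (((idm I ⊙ (Delta ⋅ eta)) ⊚ idm (I • A)) ⊙ idm A)
    ⋅ ((δ ⊚ idm (I • A)) ⊙ idm A)
    ⋅ (lui O (I • A) ⊙ idm A)
    ⋅ asci B I A A ⋅ (idm I ⊙ (Delta ⋅ eta)) ⋅ δ
    = (idm I ⊙ (idm A ⊙ Delta)) ⋅ (idm I ⊙ Delta) ⋅ (idm I ⊙ eta) ⋅ δ;
  wb_LRU :
    asci B (A • A) A I ⋅ asci B A A (A • I)
    ⋅ (idm A ⊙ (mu ⊙ lu O (A • I)))
    ⋅ (idm A ⊙ ζ A I A (A • I))
    ⋅ (idm A ⊙ (idm (A • I) ⊚ asc B A A I))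
    ⋅ (idm A ⊙ (idm (A • I) ⊚ ((Delta ⋅ eta) ⊙ idm I)))
    ⋅ (idm A ⊙ (idm (A • I) ⊚ δ))
    ⋅ (idm A ⊙ rui O (A • I))
    ⋅ asc B A A I ⋅ ((Delta ⋅ eta) ⊙ idm I) ⋅ δ
    = ((Delta ⊙ idm A) ⊙ idm I) ⋅ (Delta ⊙ idm I) ⋅ (eta ⊙ idm I) ⋅ δ;
  wb_LLU :
    asci B (A • A) A I ⋅ asci B A A (A • I)
    ⋅ (idm A ⊙ (mu ⊙ ru O (A • I)))
    ⋅ (idm A ⊙ ζ A (A • I) A I)
    ⋅ (idm A ⊙ (asc B A A I ⊚ idm (A • I)))
    ⋅ (idm A ⊙ (((Delta ⋅ eta) ⊙ idm I) ⊚ idm (A • I)))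
    ⋅ (idm A ⊙ (δ ⊚ idm (A • I)))
    ⋅ (idm A ⊙ lui O (A • I))
    ⋅ asc B A A I ⋅ ((Delta ⋅ eta) ⊙ idm I) ⋅ δ
    = ((Delta ⊙ idm A) ⊙ idm I) ⋅ (Delta ⊙ idm I) ⋅ (eta ⊙ idm I) ⋅ δ;
  wb_LRC :
    ϖ ⋅ (idm J ⊚ (eps ⋅ mu)) ⋅ asc O J A A
    ⋅ (lu B (J ∘ A) ⊚ idm A)
    ⋅ ((ϖ ⊙ idm (J ∘ A)) ⊚ idm A)
    ⋅ ((((idm J ⊚ (eps ⋅ mu)) ⋅ asc O J A A) ⊙ idm (J ∘ A)) ⊚ idm A)
    ⋅ (ζ (J ∘ A) J A A ⊚ idm A)
    ⋅ ((rui B (J ∘ A) ⊚ idm (A • A)) ⊚ idm A)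
    ⋅ ((idm (J ∘ A) ⊚ Delta) ⊚ idm A)
    ⋅ asci O (J ∘ A) A A ⋅ asci O J A (A ∘ A)
    = ϖ ⋅ (idm J ⊚ eps) ⋅ (idm J ⊚ mu) ⋅ (idm J ⊚ (idm A ⊚ mu));
  wb_LLC :
    ϖ ⋅ (idm J ⊚ (eps ⋅ mu)) ⋅ asc O J A A
    ⋅ (ru B (J ∘ A) ⊚ idm A)
    ⋅ ((idm (J ∘ A) ⊙ ϖ) ⊚ idm A)
    ⋅ ((idm (J ∘ A) ⊙ ((idm J ⊚ (eps ⋅ mu)) ⋅ asc O J A A)) ⊚ idm A)
    ⋅ (ζ J (J ∘ A) A A ⊚ idm A)
    ⋅ ((lui B (J ∘ A) ⊚ idm (A • A)) ⊚ idm A)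
    ⋅ ((idm (J ∘ A) ⊚ Delta) ⊚ idm A)
    ⋅ asci O (J ∘ A) A A ⋅ asci O J A (A ∘ A)
    = ϖ ⋅ (idm J ⊚ eps) ⋅ (idm J ⊚ mu) ⋅ (idm J ⊚ (idm A ⊚ mu));
  wb_RRC :
    ϖ ⋅ ((eps ⋅ mu) ⊚ idm J) ⋅ asci O A A J
    ⋅ (idm A ⊚ lu B (A ∘ J))
    ⋅ (idm A ⊚ (ϖ ⊙ idm (A ∘ J)))
    ⋅ (idm A ⊚ ((((eps ⋅ mu) ⊚ idm J) ⋅ asci O A A J) ⊙ idm (A ∘ J)))
    ⋅ (idm A ⊚ ζ A A (A ∘ J) J)
    ⋅ (idm A ⊚ (idm (A • A) ⊚ rui B (A ∘ J)))
    ⋅ (idm A ⊚ (Delta ⊚ idm (A ∘ J)))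
    ⋅ asc O A A (A ∘ J) ⋅ asc O (A ∘ A) A J
    = ϖ ⋅ (eps ⊚ idm J) ⋅ (mu ⊚ idm J) ⋅ ((mu ⊚ idm A) ⊚ idm J);
  wb_RLC :
    ϖ ⋅ ((eps ⋅ mu) ⊚ idm J) ⋅ asci O A A J
    ⋅ (idm A ⊚ ru B (A ∘ J))
    ⋅ (idm A ⊚ (idm (A ∘ J) ⊙ ϖ))
    ⋅ (idm A ⊚ (idm (A ∘ J) ⊙ (((eps ⋅ mu) ⊚ idm J) ⋅ asci O A A J)))
    ⋅ (idm A ⊚ ζ A A J (A ∘ J))
    ⋅ (idm A ⊚ (idm (A • A) ⊚ lui B (A ∘ J)))
    ⋅ (idm A ⊚ (Delta ⊚ idm (A ∘ J)))
    ⋅ asc O A A (A ∘ J) ⋅ asc O (A ∘ A) A J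
    = ϖ ⋅ (eps ⊚ idm J) ⋅ (mu ⊚ idm J) ⋅ ((mu ⊚ idm A) ⊚ idm J) }.

Record Icomod := {
  icm : C;
  icm_coact : hom icm (icm • I);
  icm_coassoc : asc B icm I I ⋅ (icm_coact ⊙ idm I) ⋅ icm_coact
                = (idm icm ⊙ δ) ⋅ icm_coact;
  icm_counit : ru B icm ⋅ (idm icm ⊙ tau D) ⋅ icm_coact = idm icm }.

Definition Icomod_hom (Z Z' : Icomod) (f : hom (icm Z) (icm Z')) : Prop :=
  (f ⊙ idm I) ⋅ icm_coact Z = icm_coact Z' ⋅ f.

Record HopfStr (W : WeakBimonoid) (M : C) := {
  hs_act : hom (M ∘ A) M;
  hs_coact : hom M (M • A);
  hs_act_assoc : hs_act ⋅ (hs_act ⊚ idm A) = hs_act ⋅ (idm M ⊚ mu W) ⋅ asc O M A A;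
  hs_act_unit : hs_act ⋅ (idm M ⊚ eta W) ⋅ rui O M = idm M;
  hs_coassoc : asc B M A A ⋅ (hs_coact ⊙ idm A) ⋅ hs_coact = (idm M ⊙ Delta W) ⋅ hs_coact;
  hs_counit : ru B M ⋅ (idm M ⊙ eps W) ⋅ hs_coact = idm M;
  hs_compat : hs_coact ⋅ hs_act
    = (hs_act ⊙ idm A) ⋅ (idm (M ∘ A) ⊙ mu W) ⋅ ζ M A A A
      ⋅ (idm (M • A) ⊚ Delta W) ⋅ (hs_coact ⊚ idm A) }.

Definition hopf_hom (W : WeakBimonoid) (M M' : C) (H : HopfStr W M) (H' : HopfStr W M')
    (f : hom M M') : Prop :=
  f ⋅ hs_act H = hs_act H' ⋅ (f ⊚ idm A)
  /\ (f ⊙ idm A) ⋅ hs_coact H = hs_coact H' ⋅ f.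

Definition free_act (W : WeakBimonoid) (X : C) : hom ((X ∘ A) ∘ A) (X ∘ A) :=
  (idm X ⊚ mu W) ⋅ asc O X A A.

End Duoidal.

From Corelib Require Import ssreflect.

(* The action is Z ∘ μ, and
   the coaction is Z ∘ A --ϱ∘Δ--> (Z • I) ∘ (A • A) --ζ--> (Z ∘ A) • (I ∘ A) ≅ (Z ∘ A) • A.
   The module axioms come from the monoid A alone; the comodule axioms combine
   coassociativity/counitality of Z and of A through the •-associativity and unit
   axioms of ζ; and the Hopf compatibility is (WB) transported along the
   ∘-associativity axiom of ζ.  None of the weak (co)unit axioms is needed. *)

Lemma cmp_congr_l {C : Cat} {x y z : C} (k : hom y z) {p q : hom x y} :
  p = q -> k ⋅ p = k ⋅ q.
Proof. by move=> ->. Qed.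

Ltac prefix_chain k t :=
  lazymatch t with
  | ?a ⋅ ?b => let a' := prefix_chain k a in constr:(a' ⋅ b)
  | _ => constr:(k ⋅ t)
  end.

(* [rewrite_assoc H] rewrites with [H : p1 ⋅ ... ⋅ pn = r] at any position of a
   composite, modulo associativity: after left-normalising, a segment of a chain
   is a subterm only together with everything composed to its left, so [H] is
   first generalised to [forall k, k ⋅ p1 ⋅ ... ⋅ pn = k ⋅ r]. *)
Ltac rewrite_assoc H :=
  let E := fresh in
  have E := H; rewrite ?cmp_assoc in E;
  first
    [ rewrite E
    | lazymatch type of E with @eq (@hom ?c ?x ?y) ?l ?r =>
        let E' := fresh in
        (have E' : forall (z : ob c) (k : @hom c y z),
            ltac:(lazymatch goal with k : _ |- _ =>
                    let t := prefix_chain k l in exact (t = k ⋅ r) end)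
          by move=> ? ?; apply: (eq_trans _ (cmp_congr_l _ E)); rewrite ?cmp_assoc);
        rewrite E'; clear E'
      end ];
  clear E; rewrite ?cmp_assoc.

Ltac cmp_simpl := rewrite ?cmp_assoc ?cmp_idl ?cmp_idr.

Section Monoidal.
Context {C : Cat} (M : MonStr C).
Local Notation "x ⊗ y" := (tn M x y) (at level 33, no associativity).
Local Notation "f ⊠ g" := (tm M f g) (at level 33, no associativity).
Local Notation I := (un M).

Lemma tm_idl_cmp {a b c : C} (d : C) (g : hom b c) (f : hom a b) :
  idm d ⊠ (g ⋅ f) = (idm d ⊠ g) ⋅ (idm d ⊠ f).
Proof. by rewrite -tm_cmp cmp_idl. Qed.

Lemma tm_idr_cmp {a b c : C} (d : C) (g : hom b c) (f : hom a b) :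
  (g ⋅ f) ⊠ idm d = (g ⊠ idm d) ⋅ (f ⊠ idm d).
Proof. by rewrite -tm_cmp cmp_idl. Qed.

Lemma tm_whisker_rl {a b c d : C} (f : hom a b) (g : hom c d) :
  (f ⊠ idm d) ⋅ (idm a ⊠ g) = f ⊠ g.
Proof. by rewrite -tm_cmp cmp_idl cmp_idr. Qed.

Lemma tm_whisker_lr {a b c d : C} (f : hom a b) (g : hom c d) :
  (idm b ⊠ g) ⋅ (f ⊠ idm c) = f ⊠ g.
Proof. by rewrite -tm_cmp cmp_idl cmp_idr. Qed.

Lemma tm_whisker_comm {a b c d : C} (f : hom a b) (g : hom c d) :
  (f ⊠ idm d) ⋅ (idm a ⊠ g) = (idm b ⊠ g) ⋅ (f ⊠ idm c).
Proof. by rewrite tm_whisker_rl tm_whisker_lr. Qed.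

Lemma lu_faithful (a b : C) (f g : hom a b) : idm I ⊠ f = idm I ⊠ g -> f = g.
Proof.
move=> fg.
have conj_lu (h : hom a b) : h = lu M b ⋅ (idm I ⊠ h) ⋅ lui M a.
  by rewrite lu_nat -cmp_assoc lu_isoR cmp_idr.
by rewrite (conj_lu f) (conj_lu g) fg.
Qed.

Lemma ru_faithful (a b : C) (f g : hom a b) : f ⊠ idm I = g ⊠ idm I -> f = g.
Proof.
move=> fg.
have conj_ru (h : hom a b) : h = ru M b ⋅ (h ⊠ idm I) ⋅ rui M a.
  by rewrite ru_nat -cmp_assoc ru_isoR cmp_idr.
by rewrite (conj_ru f) (conj_ru g) fg.
Qed.

(* Kelly's coherence lemmas: the outer unit triangles follow from the pentagon
   and the middle triangle. *)
Lemma kelly_lu (a b : C) : lu M (a ⊗ b) ⋅ asc M I a b = lu M a ⊠ idm b.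
Proof.
apply: lu_faithful.
set X := asc M I (I ⊗ a) b ⋅ (asc M I I a ⊠ idm b).
set Y := (asci M I I a ⊠ idm b) ⋅ asci M I (I ⊗ a) b.
have XY : X ⋅ Y = idm _.
  rewrite /X /Y; cmp_simpl.
  rewrite_assoc (eq_sym (tm_idr_cmp b (asc M I I a) (asci M I I a))).
  by rewrite asc_isoR tm_id cmp_idr asc_isoR.
have X_epi (f g : hom _ (I ⊗ (a ⊗ b))) : f ⋅ X = g ⋅ X -> f = g.
  by move=> fg; rewrite -(cmp_idr f) -(cmp_idr g) -XY !(cmp_assoc _ X) fg.
apply: X_epi; rewrite /X tm_idl_cmp; cmp_simpl.
rewrite_assoc (eq_sym (pentagon M I I a b)).
rewrite_assoc (triangle M I (a ⊗ b)).
rewrite -(tm_id M a b).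
rewrite_assoc (eq_sym (asc_nat M (ru M I) (idm a) (idm b))).
rewrite_assoc (eq_sym (asc_nat M (idm I) (lu M a) (idm b))).
by rewrite -cmp_assoc -tm_idr_cmp triangle.
Qed.

Lemma kelly_ru (a b : C) : (idm a ⊠ ru M b) ⋅ asc M a b I = ru M (a ⊗ b).
Proof.
apply: ru_faithful.
have asc_mono x (f g : hom x ((a ⊗ b) ⊗ I)) :
    asc M a b I ⋅ f = asc M a b I ⋅ g -> f = g.
  by move=> fg; rewrite -(cmp_idl f) -(cmp_idl g) -(asc_isoL M a b I) -!cmp_assoc fg.
apply: asc_mono; symmetry.
rewrite -(triangle M (a ⊗ b) I) -(tm_id M a b); cmp_simpl.
rewrite_assoc (asc_nat M (idm a) (idm b) (lu M I)).
rewrite_assoc (pentagon M a b I I).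
rewrite_assoc (eq_sym (tm_idl_cmp a (idm b ⊠ lu M I) (asc M b I I))).
rewrite triangle.
rewrite_assoc (eq_sym (asc_nat M (idm a) (ru M b) (idm I))).
by rewrite tm_idr_cmp !cmp_assoc.
Qed.

Lemma asc_rui (a b : C) : asc M a b I ⋅ rui M (a ⊗ b) = idm a ⊠ rui M b.
Proof.
rewrite -(cmp_idl (asc M a b I ⋅ rui M (a ⊗ b))).
rewrite -(tm_id M a (b ⊗ I)) -(ru_isoL M b) tm_idl_cmp; cmp_simpl.
rewrite_assoc (kelly_ru a b).
by rewrite_assoc (ru_isoR M (a ⊗ b)); rewrite cmp_idr.
Qed.

End Monoidal.

Section FreeModule.
Context {C : Cat} {M : MonStr C} {A : C} {m : hom (tn M A A) A} {u : hom (un M) A}.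
Local Notation "x ⊗ y" := (tn M x y) (at level 33, no associativity).
Local Notation "f ⊠ g" := (tm M f g) (at level 33, no associativity).
Local Notation act X := ((idm X ⊠ m) ⋅ asc M X A A).

Hypothesis m_assoc : m ⋅ (m ⊠ idm A) = m ⋅ (idm A ⊠ m) ⋅ asc M A A A.
Hypothesis m_unitr : m ⋅ (idm A ⊠ u) = ru M A.

Lemma free_act_assoc (X : C) :
  act X ⋅ (act X ⊠ idm A) = act X ⋅ (idm (X ⊗ A) ⊠ m) ⋅ asc M (X ⊗ A) A A.
Proof.
rewrite tm_idr_cmp; cmp_simpl.
rewrite_assoc (asc_nat M (idm X) m (idm A)).
rewrite_assoc (eq_sym (tm_idl_cmp M X m (m ⊠ idm A))).
rewrite m_assoc !tm_idl_cmp; cmp_simpl.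
rewrite_assoc (eq_sym (pentagon M X A A A)).
rewrite_assoc (eq_sym (asc_nat M (idm X) (idm A) m)).
by rewrite tm_id.
Qed.

Lemma free_act_unit (X : C) : act X ⋅ (idm (X ⊗ A) ⊠ u) ⋅ rui M (X ⊗ A) = idm (X ⊗ A).
Proof.
cmp_simpl.
have u_nat := asc_nat M (idm X) (idm A) u; rewrite tm_id in u_nat.
rewrite_assoc u_nat.
rewrite_assoc (asc_rui M X A).
by rewrite -!tm_idl_cmp; cmp_simpl; rewrite m_unitr ru_isoR tm_id.
Qed.

Lemma free_act_natural (X Y : C) (f : hom X Y) :
  (f ⊠ idm A) ⋅ act X = act Y ⋅ ((f ⊠ idm A) ⊠ idm A).
Proof.
cmp_simpl; rewrite tm_whisker_rl -tm_whisker_lr -tm_id; cmp_simpl.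
by rewrite_assoc (eq_sym (asc_nat M f (idm A) (idm A))).
Qed.

End FreeModule.

Section Duoidal.
Context {C : Cat} {O B : MonStr C} {D : DuoStr O B}.
Local Notation "x ∘ y" := (tn O x y) (at level 33, no associativity).
Local Notation "x • y" := (tn B x y) (at level 33, no associativity).
Local Notation "f ⊚ g" := (tm O f g) (at level 33, no associativity).
Local Notation "f ⊙ g" := (tm B f g) (at level 33, no associativity).
Local Notation I := (un O).
Local Notation J := (un B).
Local Notation ζ := (zeta D).

Lemma zeta_assocO_asci (a b c d e f : C) :
  ζ (a ∘ c) (b ∘ d) e f ⋅ (ζ a b c d ⊚ idm (e • f))
  = (asci O a c e ⊙ asci O b d f) ⋅ ζ a b (c ∘ e) (d ∘ f) ⋅ (idm (a • b) ⊚ ζ c d e f)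
    ⋅ asc O (a • b) (c • d) (e • f).
Proof.
transitivity ((asci O a c e ⊙ asci O b d f) ⋅ (asc O a c e ⊙ asc O b d f)
              ⋅ ζ (a ∘ c) (b ∘ d) e f ⋅ (ζ a b c d ⊚ idm (e • f))).
  by rewrite -tm_cmp !asc_isoL tm_id cmp_idl.
by rewrite_assoc (zeta_assocO D a b c d e f).
Qed.

Section FreeHopfModule.
Context {A : C} {d : hom A (A • A)} {e : hom A J}.
Hypothesis d_coassoc : asc B A A A ⋅ (d ⊙ idm A) ⋅ d = (idm A ⊙ d) ⋅ d.
Hypothesis d_counitr : ru B A ⋅ (idm A ⊙ e) ⋅ d = idm A.

Definition free_coact (Z : Icomod D) : hom (icm Z ∘ A) ((icm Z ∘ A) • A) :=
  (idm (icm Z ∘ A) ⊙ lu O A) ⋅ ζ (icm Z) I A A ⋅ (icm_coact Z ⊚ d).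

Lemma free_coact_counit (Z : Icomod D) :
  ru B (icm Z ∘ A) ⋅ (idm (icm Z ∘ A) ⊙ e) ⋅ free_coact Z = idm (icm Z ∘ A).
Proof.
rewrite /free_coact; cmp_simpl.
rewrite_assoc (eq_sym (tm_idl_cmp B (icm Z ∘ A) e (lu O A))).
rewrite -lu_nat -(varpi_unitl D) -(cmp_assoc (varpi D)) -tm_cmp cmp_idr cmp_idl.
rewrite tm_idl_cmp; cmp_simpl.
have tau_e_nat := zeta_nat D (idm (icm Z)) (tau D) (idm A) e; rewrite tm_id in tau_e_nat.
rewrite_assoc (eq_sym tau_e_nat).
rewrite_assoc (zeta_counitr D (icm Z) A).
by rewrite -!tm_cmp icm_counit d_counitr tm_id.
Qed.

Lemma free_coact_coassoc (Z : Icomod D) :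
  asc B (icm Z ∘ A) A A ⋅ (free_coact Z ⊙ idm A) ⋅ free_coact Z
  = (idm (icm Z ∘ A) ⊙ d) ⋅ free_coact Z.
Proof.
rewrite /free_coact !(tm_idr_cmp B); cmp_simpl.
rewrite_assoc (tm_whisker_comm B (icm_coact Z ⊚ d) (lu O A)).
rewrite_assoc (tm_whisker_comm B (ζ (icm Z) I A A) (lu O A)).
rewrite_assoc (tm_whisker_rl B (idm (icm Z ∘ A) ⊙ lu O A) (lu O A)).
rewrite_assoc (asc_nat B (idm (icm Z ∘ A)) (lu O A) (lu O A)).
have coact_d_nat := zeta_nat D (icm_coact Z) (idm I) d (idm A).
rewrite !tm_id in coact_d_nat; rewrite_assoc (eq_sym coact_d_nat).
rewrite_assoc (zeta_assocB D (icm Z) I I A A A).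
rewrite_assoc (eq_sym (tm_cmp O (icm_coact Z ⊙ idm I) (asc B (icm Z) I I)
                                (d ⊙ idm A) (asc B A A A))).
rewrite_assoc (eq_sym (tm_cmp O (icm_coact Z) (asc B (icm Z) I I ⋅ icm_coact Z ⊙ idm I)
                                d (asc B A A A ⋅ d ⊙ idm A))).
rewrite icm_coassoc d_coassoc tm_cmp; cmp_simpl.
have delta_d_nat := zeta_nat D (idm (icm Z)) (delta D) (idm A) d.
rewrite !tm_id in delta_d_nat; rewrite_assoc delta_d_nat.
rewrite_assoc (eq_sym (tm_idl_cmp B (icm Z ∘ A) (lu O A ⊙ lu O A) (ζ I I A A))).
rewrite_assoc (eq_sym (tm_idl_cmp B (icm Z ∘ A) (lu O A ⊙ lu O A ⋅ ζ I I A A)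
                                  (delta D ⊚ d))).
rewrite_assoc (eq_sym (tm_idl_cmp B (icm Z ∘ A) d (lu O A))).
by rewrite -(tm_whisker_rl O (delta D) d); cmp_simpl; rewrite zeta_unitl lu_nat.
Qed.

Lemma free_coact_natural (Z Z' : Icomod D) (f : hom (icm Z) (icm Z')) :
  Icomod_hom f -> ((f ⊚ idm A) ⊙ idm A) ⋅ free_coact Z = free_coact Z' ⋅ (f ⊚ idm A).
Proof.
rewrite /Icomod_hom /free_coact => f_coact; cmp_simpl.
rewrite_assoc (tm_whisker_comm B (f ⊚ idm A) (lu O A)).
have f_nat := zeta_nat D f (idm I) (idm A) (idm A); rewrite !tm_id in f_nat.
rewrite_assoc (eq_sym f_nat).
rewrite_assoc (eq_sym (tm_cmp O (icm_coact Z) (f ⊙ idm I) d (idm (A • A)))).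
rewrite f_coact cmp_idl.
rewrite_assoc (eq_sym (tm_cmp O f (icm_coact Z') (idm A) d)).
by rewrite cmp_idr.
Qed.

Context {m : hom (A ∘ A) A}.
Hypothesis d_mult : d ⋅ m = (m ⊙ m) ⋅ ζ A A A A ⋅ (d ⊚ d).

Local Notation act X := ((idm X ⊚ m) ⋅ asc O X A A).

Lemma free_hopf_compat (Z : Icomod D) :
  free_coact Z ⋅ act (icm Z)
  = (act (icm Z) ⊙ idm A) ⋅ (idm ((icm Z ∘ A) ∘ A) ⊙ m) ⋅ ζ (icm Z ∘ A) A A A
    ⋅ (idm ((icm Z ∘ A) • A) ⊚ d) ⋅ (free_coact Z ⊚ idm A).
Proof.
rewrite /free_coact.
(* Both sides reduce to ϱ ∘ (Δ ∘ Δ) followed by the (WB) expansion of Δ ⋅ μ; on the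
   right this needs the ∘-associativity of ζ and Kelly's lemma to absorb λ_A ∘ A. *)
transitivity ((idm (icm Z ∘ A) ⊙ lu O A) ⋅ ζ (icm Z) I A A ⋅ (idm (icm Z • I) ⊚ (m ⊙ m))
              ⋅ (idm (icm Z • I) ⊚ ζ A A A A) ⋅ (icm_coact Z ⊚ (d ⊚ d))
              ⋅ asc O (icm Z) A A).
- cmp_simpl.
  rewrite_assoc (eq_sym (tm_cmp O (idm (icm Z)) (icm_coact Z) m d)).
  rewrite cmp_idr d_mult -(tm_whisker_lr O (icm_coact Z)) !tm_idl_cmp; cmp_simpl.
  by rewrite_assoc (tm_whisker_lr O (icm_coact Z) (d ⊚ d)).
- rewrite !tm_idr_cmp; cmp_simpl.
  rewrite_assoc (eq_sym (tm_idr_cmp B A (idm (icm Z) ⊚ m) (asc O (icm Z) A A))).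
  rewrite_assoc (eq_sym (tm_whisker_comm O (idm (icm Z ∘ A) ⊙ lu O A) d)).
  rewrite_assoc (eq_sym (tm_whisker_comm O (ζ (icm Z) I A A) d)).
  rewrite_assoc (tm_whisker_lr O (icm_coact Z ⊚ d) d).
  have lu_zeta := zeta_nat D (idm (icm Z ∘ A)) (lu O A) (idm A) (idm A).
  rewrite !tm_id in lu_zeta; rewrite_assoc lu_zeta.
  rewrite_assoc (zeta_assocO_asci (icm Z) I A A A A).
  rewrite_assoc (eq_sym (tm_idl_cmp B ((icm Z ∘ A) ∘ A) m (lu O A ⊚ idm A))).
  rewrite_assoc (tm_whisker_rl B ((idm (icm Z) ⊚ m) ⋅ asc O (icm Z) A A)
                                 (m ⋅ (lu O A ⊚ idm A))).
  rewrite_assoc (eq_sym (tm_cmp B (asci O (icm Z) A A) ((idm (icm Z) ⊚ m) ⋅ asc O (icm Z) A A)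
                                  (asci O I A A) (m ⋅ (lu O A ⊚ idm A)))).
  rewrite -(kelly_lu O A A); cmp_simpl.
  rewrite_assoc (asc_isoR O (icm Z) A A).
  rewrite_assoc (asc_isoR O I A A).
  rewrite !cmp_idr -lu_nat.
  have whisker_lu : (idm (icm Z) ⊚ m) ⊙ (lu O A ⋅ (idm I ⊚ m))
           = (idm (icm Z ∘ A) ⊙ lu O A) ⋅ ((idm (icm Z) ⊚ m) ⊙ (idm I ⊚ m))
    by rewrite -tm_cmp cmp_idl.
  rewrite whisker_lu; cmp_simpl.
  have m_nat := zeta_nat D (idm (icm Z)) (idm I) m m; rewrite !tm_id in m_nat.
  rewrite_assoc (eq_sym m_nat).
  by rewrite_assoc (asc_nat O (icm_coact Z) d d).
Qed.

End FreeHopfModule.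
End Duoidal.

Arguments free_coact {C O B D A} d Z.

Theorem proposition5p3 (C : Cat) (O B : MonStr C) (D : DuoStr O B) (A : C)
    (W : WeakBimonoid D A) :
  exists F : forall Z : Icomod D, HopfStr W (tn O (icm Z) A),
    (forall Z : Icomod D, hs_act (F Z) = free_act W (icm Z)) /\
    (forall (Z Z' : Icomod D) (f : hom (icm Z) (icm Z')),
        Icomod_hom f -> hopf_hom (F Z) (F Z') (tm O f (idm A))).
Proof.
pose F Z := {|
  hs_act := free_act W (icm Z);
  hs_coact := free_coact (Delta W) Z;
  hs_act_assoc := free_act_assoc (mu_assoc W) (icm Z);
  hs_act_unit := free_act_unit (mu_unitr W) (icm Z);
  hs_coassoc := free_coact_coassoc (Delta_coassoc W) Z;
  hs_counit := free_coact_counit (Delta_counitr W) Z;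
  hs_compat := free_hopf_compat (wb_mult W) Z |}.
exists F; split=> // Z Z' f f_comod; split.
- exact: free_act_natural.
- exact: free_coact_natural.
Qed.
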